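(* Let $r\ge1$ be an integer, $\beta>0$, and let $Q$ be a complex polynomial of degree $r$ with $Q(0)=0$. Define polynomials $\widehat P_n(x)$, $n\ge0$, by $$\sum_{n=0}^\infty\frac{\widehat P_n(x)}{n!(\beta)_n}z^n=e^{Q(z)}\,{}_1F_1\left(\begin{matrix}-x\\ \beta\end{matrix};-z\right),$$ and let $\sigma$ be the operator $\sigma=x\,\partial^2T_-+\beta\,\partial$, where $\partial f(x)=f(x+1)-f(x)$ and $T_-f(x)=f(x-1)$; that is, $\sigma f(x)=(x+\beta)f(x+1)-(2x+\beta)f(x)+xf(x-1)$. Then for all $n\ge1$, $$\sigma\widehat P_n(x)=n(n+\beta-1)\,\widehat P_{n-1}(x).$$
   Context: $(a)_n=a(a+1)\cdots(a+n-1)$, $(a)_0=1$; ${}_1F_1\left(\begin{matrix}a\\ b\end{matrix};x\right)=\sum_{m\ge0}\frac{(a)_m}{(b)_m}\frac{x^m}{m!}$. *)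

From HB Require Import structures.
From mathcomp Require Import all_boot all_order all_algebra.
From mathcomp Require Import complex.
From mathcomp Require Import reals.
Set Implicit Arguments. Unset Strict Implicit. Unset Printing Implicit Defensive.
Import Order.TTheory GRing.Theory Num.Theory.
Local Open Scope ring_scope.

Definition poch {K : comRingType} (a : K) (n : nat) : K :=
  \prod_(i < n) (a + i%:R).

Definition poch_negX {K : comRingType} (m : nat) : {poly K} :=
  \prod_(i < m) (- 'X + (i%:R)%:P).

(* k-th coefficient of the formal power series exp(Q(z)), for Q(0) = 0:
   exp(Q) = sum_l Q^l / l!, and since Q(0)=0 only l <= k contribute to z^k. *)
Definition expQ_coef {K : fieldType} (Q : {poly K}) (k : nat) : K :=
  \sum_(l < k.+1) (Q ^+ l)`_k / (l`!)%:R.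

(* hat P_n(x): coefficient extraction from
   sum_n hatP_n(x) z^n/(n! (beta)_n) = e^{Q(z)} 1F1(-x; beta; -z),
   where 1F1(-x;beta;-z) = sum_m (-x)_m/(beta)_m (-z)^m/m!. *)
Definition Phat {K : fieldType} (Q : {poly K}) (beta : K) (n : nat) : {poly K} :=
  ((n`!)%:R * poch beta n) *:
  \sum_(m < n.+1) (expQ_coef Q (n - m) * (-1) ^+ m / (poch beta m * (m`!)%:R))
                   *: poch_negX m.

Definition sigma_op {K : comRingType} (beta : K) (f : {poly K}) : {poly K} :=
  ('X + beta%:P) * (f \Po ('X + 1)) - (2%:R *: 'X + beta%:P) * f
  + 'X * (f \Po ('X - 1)).

From HB Require Import structures.
From mathcomp Require Import all_boot all_order all_algebra.
From mathcomp Require Import complex.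
From mathcomp Require Import reals.
From mathcomp Require Import ring.
Import Order.TTheory GRing.Theory Num.Theory.
Local Open Scope ring_scope.

(* In the basis of Pochhammer polynomials (-x)_m, sigma is a lowering operator:
   sigma 1 = 0 and sigma (-x)_(m+1) = -(m+1)(m+beta) (-x)_m.  Expanding the
   generating function e^Q(z) 1F1(-x; beta; -z) in this basis, this is exactly
   what makes sigma act on it as multiplication by z, i.e. sigma maps the
   z^(n+1)-coefficient P_(n+1)/((n+1)! (beta)_(n+1)) to the z^n-coefficient. *)

Section Pochhammer.
Variable K : comNzRingType.
Local Notation pn := (@poch_negX K).

Lemma pochS (a : K) m : poch a m.+1 = poch a m * (a + m%:R).
Proof. by rewrite /poch big_ord_recr. Qed.

Lemma poch_negXSr m : pn m.+1 = pn m * (- 'X + m%:R%:P).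
Proof. by rewrite /poch_negX big_ord_recr. Qed.

Lemma comp_poly_negX_addC (c : K) (q : {poly K}) : (- 'X + c%:P) \Po q = - q + c%:P.
Proof. by rewrite comp_polyD linearN /= comp_polyX comp_polyC. Qed.

Lemma poch_negXS_comp_addX1 m : pn m.+1 \Po ('X + 1) = (- 'X - 1) * pn m.
Proof.
rewrite /poch_negX big_ord_recl comp_polyM rmorph_prod /= comp_poly_negX_addC.
congr (_ * _); first by rewrite addr0 opprD.
apply: eq_bigr => i _; rewrite comp_poly_negX_addC /bump /= add1n -natr1 polyCD.
ring.
Qed.

Lemma mulX_poch_negX_comp_subX1 m : 'X * (pn m \Po ('X - 1)) = - pn m.+1.
Proof.
rewrite /poch_negX big_ord_recl rmorph_prod /= addr0 mulNr opprK; congr (_ * _).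
apply: eq_bigr => i _; rewrite comp_poly_negX_addC /bump /= add1n -natr1 polyCD.
ring.
Qed.

End Pochhammer.

Section SigmaOp.
Variables (K : comNzRingType) (beta : K).
Local Notation pn := (@poch_negX K).
Local Notation sigma := (sigma_op beta).

Lemma sigma_op_is_linear : linear sigma.
Proof. by move=> a f g; rewrite /sigma_op !comp_polyD !comp_polyZ -!mul_polyC; ring. Qed.

HB.instance Definition _ :=
  GRing.isLinear.Build K {poly K} {poly K} *:%R sigma sigma_op_is_linear.

Lemma sigma_poch_negX0 : sigma (pn 0) = 0.
Proof. by rewrite /sigma_op /poch_negX big_ord0 !comp_polyC -!mul_polyC; ring. Qed.

(* Every term is [pn m] times a quadratic in 'X, and these quadratics cancel
   down to the constant [-(m+1)(m+beta)]. *)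
Lemma sigma_poch_negXS m :
  sigma (pn m.+1) = - (m.+1%:R * (m%:R + beta)) *: pn m.
Proof.
have shift_down : 'X * (pn m.+1 \Po ('X - 1))
    = - pn m * (- 'X + m%:R%:P) * (- 'X + m.+1%:R%:P).
  rewrite poch_negXSr comp_polyM comp_poly_negX_addC mulrA mulX_poch_negX_comp_subX1.
  by rewrite poch_negXSr -natr1 polyCD; ring.
rewrite /sigma_op poch_negXS_comp_addX1 shift_down poch_negXSr -!mul_polyC.
by rewrite !(rmorphN, rmorphM, rmorphD) /= polyC1 !polyC_natr -natr1; ring.
Qed.

End SigmaOp.

Section GeneratingFunction.
Variables (K : numFieldType) (beta : K).
Hypothesis beta_addn_neq0 : forall i : nat, beta + i%:R != 0.

Lemma poch_neq0 m : poch beta m != 0.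
Proof.
elim: m => [|m IHm]; first by rewrite /poch big_ord0 oner_neq0.
by rewrite pochS mulf_neq0.
Qed.

Definition gf_coef (Q : {poly K}) n : {poly K} :=
  \sum_(m < n.+1) (expQ_coef Q (n - m) * (-1) ^+ m / (poch beta m * (m`!)%:R))
                    *: poch_negX m.

Lemma Phat_gf_coef Q n : Phat Q beta n = ((n`!)%:R * poch beta n) *: gf_coef Q n.
Proof. by []. Qed.

Lemma sigma_gf_coefS Q n : sigma_op beta (gf_coef Q n.+1) = gf_coef Q n.
Proof.
rewrite /gf_coef linear_sum big_ord_recl linearZ /= sigma_poch_negX0 scaler0 add0r.
apply: eq_bigr => i _; rewrite linearZ /= sigma_poch_negXS scalerA; congr (_ *: _).
rewrite /bump /= add1n subSS pochS factS natrM exprS.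
have fact_neq0 : (i`!)%:R != 0 :> K by rewrite pnatr_eq0 -lt0n fact_gt0.
have succ_neq0 : 1 + i%:R != 0 :> K by rewrite addrC natr1 pnatr_eq0.
by field; rewrite fact_neq0 poch_neq0 succ_neq0 beta_addn_neq0.
Qed.

End GeneratingFunction.

Theorem mainTheorem4 (R : realType) (r : nat) (beta : R[i]) (Q : {poly R[i]}) :
  (1 <= r)%N -> 0 < beta -> size Q = r.+1 -> Q.[0] = 0 ->
  forall n : nat, (1 <= n)%N ->
    sigma_op beta (Phat Q beta n) = (n%:R * (n%:R + beta - 1)) *: Phat Q beta n.-1.
Proof.
move=> _ beta_gt0 _ _ [//|n] _.
have beta_addn_neq0 i : beta + i%:R != 0 by rewrite lt0r_neq0 // ltr_wpDr.
rewrite /= !Phat_gf_coef linearZ /= sigma_gf_coefS // scalerA; congr (_ *: _).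
by rewrite pochS factS natrM -natr1; ring.
Qed.
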